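(* There is no open neighborhood $V$ of zero in $C^\infty_{\mathrm{ap}}(\mathbb{R}^n,\mathbb{R}^n)$ such that the restriction $\mathrm{Exp}_{\mathrm{LG}}|_V:V\to\mathrm{Diff}^\infty_{\mathrm{ap}}(\mathbb{R}^n)$ is a $C^1_F$-diffeomorphism onto its image.
   Context: For integer $k\ge0$, $C^k_b(\mathbb{R}^n,\mathbb{R})$ is the space of $C^k$ functions with bounded continuous derivatives of order $\le k$, norm $|f|_k=\max_{|\beta|\le k}\sup|\partial^\beta f|$; $C^k_{\mathrm{ap}}=\{f\in C^k_b:\{f(\cdot+c)\}_{c\in\mathbb{R}^n}\text{ precompact in }C^k_b\}$; $C^\infty_{\mathrm{ap}}=\bigcap_{k\ge1}C^k_{\mathrm{ap}}$ with the Fréchet topology of the norms $|\cdot|_k$; vector-valued versions componentwise. $\mathrm{Diff}^\infty_{\mathrm{ap}}(\mathbb{R}^n)$ is the group of maps $\varphi=\mathrm{id}+f$, $f\in C^\infty_{\mathrm{ap}}(\mathbb{R}^n,\mathbb{R}^n)$, $\inf_x\det(I+[d_xf])>0$, with the Fréchet topology of $f$. $\mathrm{Exp}_{\mathrm{LG}}(u)=\varphi(1)$ where $\varphi$ is the unique $C^1_F$ solution in $\mathrm{Diff}^\infty_{\mathrm{ap}}(\mathbb{R}^n)$ of $\dot\varphi=u\circ\varphi$, $\varphi(0)=\mathrm{id}$. $C^1_F$: Fréchet continuously differentiable (directional derivatives exist and are jointly continuous in point and direction); a $C^1_F$-diffeomorphism onto its image is a homeomorphism onto its image which is $C^1_F$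 with $C^1_F$ inverse. *)

From HB Require Import structures.
From mathcomp Require Import all_boot all_order all_algebra.
From mathcomp Require Import all_classical all_reals all_analysis.
Set Implicit Arguments. Unset Strict Implicit. Unset Printing Implicit Defensive.
Import Order.TTheory GRing.Theory Num.Theory.
Import numFieldNormedType.Exports.
Local Open Scope classical_set_scope.
Local Open Scope ring_scope.

Section Defs.
Variables (R : realType) (n : nat).

Definition pt := 'rV[R]_n.
Definition vfun := pt -> pt.

Definition pd (i : 'I_n) (f : pt -> R) : pt -> R :=
  fun x => derive f x (delta_mx 0 i : pt).

(* iterated partial derivative along the list of coordinates s
   (multi-index of order size s) *)
Definition iterd (s : seq 'I_n) (f : pt -> R) : pt -> R := foldr pd f s.

Definition comp (f : vfun) (i : 'I_n) : pt -> R := fun x => f x ord0 i.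

Definition vadd (f g : vfun) : vfun := fun x => f x + g x.
Definition vsub (f g : vfun) : vfun := fun x => f x - g x.
Definition vscale (t : R) (f : vfun) : vfun := fun x => t *: f x.
Definition vzero : vfun := fun _ => 0.

Definition smooth (f : vfun) : Prop :=
  forall (i : 'I_n) (s : seq 'I_n),
    continuous (iterd s (comp f i)) /\
    forall (x : pt) (j : 'I_n), derivable (iterd s (comp f i)) x (delta_mx 0 j : pt).

Definition all_bounded (f : vfun) : Prop :=
  forall (i : 'I_n) (s : seq 'I_n), exists M : R,
    forall x : pt, `|iterd s (comp f i) x| <= M.

Definition knorm (k : nat) (f : vfun) : R :=
  sup [set r : R | exists (s : seq 'I_n) (i : 'I_n) (x : pt),
                     (size s <= k)%N /\ r = `|iterd s (comp f i) x| ].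

Definition transl (c : pt) (f : vfun) : vfun := fun x => f (x + c).

(* {f(.+c)}_c is precompact (= totally bounded) in (C^k_b, |.|_k), for all k *)
Definition ap_translates (f : vfun) : Prop :=
  forall (k : nat) (eps : R), 0 < eps ->
    exists cs : seq pt, forall c : pt,
      exists2 c', c' \in cs & knorm k (vsub (transl c f) (transl c' f)) < eps.

Definition Cinf_ap (f : vfun) : Prop :=
  smooth f /\ all_bounded f /\ ap_translates f.

Definition jac (f : vfun) (x : pt) : 'M[R]_n :=
  \matrix_(i < n, j < n) pd j (comp f i) x.

(* f is the displacement of an element id + f of Diff^infinity_ap(R^n) *)
Definition DiffAp (f : vfun) : Prop :=
  Cinf_ap f /\ exists2 d : R, 0 < d &
    forall x : pt, d <= \det (1%:M + jac f x).

Definition compose_id (u f : vfun) : vfun := fun x => u (x + f x).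

Definition unit_itv : set R := [set t | 0 <= t <= 1].

(* g : [0,1] -> C^inf_ap is a C^1_F solution in Diff^infinity_ap of
   d/dt (id + g t) = u o (id + g t), (id + g 0) = id. *)
Definition IsExpSol (u : vfun) (g : R -> vfun) : Prop :=
  g 0 = vzero /\
  (forall t, unit_itv t -> DiffAp (g t)) /\
  (forall t, unit_itv t -> Cinf_ap (compose_id u (g t))) /\
  (forall t, unit_itv t -> forall (k : nat) (eps : R), 0 < eps ->
     exists2 d : R, 0 < d & forall s, unit_itv s -> 0 < `|s - t| < d ->
       knorm k (vsub (vscale (s - t)^-1 (vsub (g s) (g t)))
                     (compose_id u (g t))) < eps) /\
  (forall t, unit_itv t -> forall (k : nat) (eps : R), 0 < eps ->
     exists2 d : R, 0 < d & forall s, unit_itv s -> `|s - t| < d ->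
       knorm k (vsub (compose_id u (g s)) (compose_id u (g t))) < eps).

(* Exp_LG(u) = phi(1), represented by its displacement phi(1) - id.
   (The solution is unique by the paper; if none existed we return 0.) *)
Definition expLG (u : vfun) : vfun :=
  match pselect (exists g, IsExpSol u g) with
  | left h => (proj1_sig (cid h)) 1
  | right _ => vzero
  end.

Definition open_nbhd0 (V : set vfun) : Prop :=
  (forall v, V v -> Cinf_ap v) /\ V vzero /\
  forall v, V v -> exists (k : nat) (d : R), 0 < d /\
     forall w, Cinf_ap w -> knorm k (vsub w v) < d -> V w.

Definition fcont_on (W : set vfun) (F : vfun -> vfun) : Prop :=
  forall w, W w -> forall (k : nat) (eps : R), 0 < eps ->
    exists (k' : nat) (d : R), 0 < d /\
      forall w', W w' -> knorm k' (vsub w' w) < d ->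
        knorm k (vsub (F w') (F w)) < eps.

Definition C1F_on (W : set vfun) (F : vfun -> vfun) : Prop :=
  exists dF : vfun -> vfun -> vfun,
    (forall w h, W w -> Cinf_ap h -> Cinf_ap (dF w h)) /\
    (forall w h, W w -> Cinf_ap h -> forall (k : nat) (eps : R), 0 < eps ->
       exists2 d : R, 0 < d & forall t : R, 0 < `|t| < d ->
         W (vadd w (vscale t h)) ->
         knorm k (vsub (vscale t^-1 (vsub (F (vadd w (vscale t h))) (F w)))
                       (dF w h)) < eps) /\
    (forall w h, W w -> Cinf_ap h -> forall (k : nat) (eps : R), 0 < eps ->
       exists (k' : nat) (d : R), 0 < d /\
         forall w' h', W w' -> Cinf_ap h' ->
           knorm k' (vsub w' w) < d -> knorm k' (vsub h' h) < d ->
           knorm k (vsub (dF w' h') (dF w h)) < eps).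

(* F|_V is a C^1_F diffeomorphism onto its image F(V) (in Diff^inf_ap,
   topologised via displacements). *)
Definition C1F_diffeo_onto_image (V : set vfun) (F : vfun -> vfun) : Prop :=
  (forall v, V v -> DiffAp (F v)) /\
  (forall v w, V v -> V w -> F v = F w -> v = w) /\
  fcont_on V F /\ C1F_on V F /\
  exists G : vfun -> vfun,
    (forall v, V v -> G (F v) = v) /\
    fcont_on (F @` V) G /\ C1F_on (F @` V) G.

End Defs.

(* Exp_LG is not injective near 0.  Fix a coordinate x_i0, a small period P and
   w = 2 pi / P.  The constant field P e_i0 and the field u(x) = P / (1 + b cos (w x_i0)) e_i0
   have the same time-one map, the translation by P e_i0: along a trajectory of u the clock
   A(y) = (y + (b / w) sin (w y)) / P satisfies A' u = 1, so it grows by exactly 1 in unit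
   time, while A(y + P) = A(y) + 1 and A is injective.  Both fields are C^k-small once P is
   small, since every derivative of u of positive order carries a factor b, which is chosen
   small against w^k. *)

From Pilot Require Import Defs.
From HB Require Import structures.
From mathcomp Require Import all_boot all_order all_algebra.
From mathcomp Require Import all_classical all_reals all_analysis.
From mathcomp Require Import ring lra.
Set Implicit Arguments. Unset Strict Implicit. Unset Printing Implicit Defensive.
Import Order.TTheory GRing.Theory Num.Theory.
Import numFieldNormedType.Exports.
Local Open Scope classical_set_scope.
Local Open Scope ring_scope.

Section RealFunctions.
Variable R : realType.

Lemma real_induction01 (Q : R -> Prop) :
  (forall t, 0 <= t <= 1 -> (forall r, 0 <= r < t -> Q r) -> Q t) ->
  (forall t, 0 <= t < 1 -> (forall r, 0 <= r <= t -> Q r) ->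
     exists2 d, 0 < d & forall r, t < r < t + d -> r <= 1 -> Q r) ->
  Q 1.
Proof.
move=> closed open.
pose S := [set t : R | 0 <= t <= 1 /\ forall r, 0 <= r <= t -> Q r].
have Q0 : Q 0 by apply: closed => [|r]; [rewrite lexx ler01 | lra].
have S0 : S 0 by split=> [|r r0]; [rewrite lexx ler01 | have -> : r = 0 by lra].
have S_ub : ubound S 1 by move=> t [/andP[]].
have supS : has_sup S by split; [exists 0 | exists 1].
set tau := sup S.
have tau01 : 0 <= tau <= 1.
  apply/andP; split; first by apply: ub_le_sup => //; case: supS.
  by apply: ge_sup; [exists 0 |].
have below r : 0 <= r < tau -> Q r.
  move=> /andP[r0 rtau]; move: (rtau); rewrite -subr_gt0 => /sup_adherent.
  case/(_ S supS) => s [_ Ss] rs.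
  by apply: Ss; rewrite r0 /=; move: rs; rewrite -/tau; lra.
have upto r : 0 <= r <= tau -> Q r.
  move=> /andP[r0]; rewrite le_eqVlt => /orP[/eqP -> | rtau]; last by apply: below; rewrite r0.
  exact: closed.
have [tau1|tau1] := ltrP tau 1; last by apply: upto; lra.
have tau_itv : 0 <= tau < 1 by rewrite tau1 andbT; case/andP: tau01.
have [d d0 above] := open tau tau_itv upto.
pose t' := Num.min (tau + d / 2) 1.
have t'_le : t' <= tau + d / 2 /\ t' <= 1 by split; rewrite ge_min lexx ?orbT.
have tau_lt : tau < t' by rewrite lt_min tau1 ltrDl divr_gt0.
suff St' : S t'.
  have : t' <= tau by apply: ub_le_sup => //; case: supS.
  by rewrite leNgt tau_lt.
split=> [|r /andP[r0 rt']]; first lra.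
have [rtau|taur] := lerP r tau; first by apply: upto; rewrite r0.
by apply: above; lra.
Qed.

Lemma is_derive_approx (f : R -> R) (y0 a : R) : is_derive y0 1 f a ->
  forall e : R, 0 < e -> exists2 d : R, 0 < d & forall y, `|y - y0| < d ->
    `|f y - f y0 - a * (y - y0)| <= e * `|y - y0|.
Proof.
move=> [df fa] e e0.
have : (fun h : R => h^-1 *: ((f \o shift y0) (h *: 1) - f y0)) @ 0^' --> a.
  by rewrite -fa; exact: df.
move/cvgrPdist_le => /(_ e e0); rewrite near_withinE => /nbhs_ballP[d d0 hd].
exists d => // y yd; have [->|yy0] := eqVneq y y0.
  by rewrite !subrr mulr0 subrr normr0 mulr0.
have := hd (y - y0); rewrite /ball /= sub0r normrN => /(_ yd); rewrite subr_eq0 => /(_ yy0).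
rewrite /shift /= [_%:A]/GRing.scale /= mulr1 subrK [_ *: _]/GRing.scale /= => close.
have -> : f y - f y0 - a * (y - y0) = - ((y - y0) * (a - (y - y0)^-1 * (f y - f y0))).
  by field; rewrite subr_eq0.
by rewrite normrN normrM mulrC ler_wpM2r.
Qed.

Definition is_derive01 (t : R) (G : R -> R) (v : R) :=
  forall e, 0 < e -> exists2 d, 0 < d & forall s, 0 <= s <= 1 -> `|s - t| < d ->
    `|G s - G t - (s - t) * v| <= e * `|s - t|.

Lemma is_derive01_eq (th : R -> R) :
  (forall t, 0 <= t <= 1 -> is_derive01 t th 0) -> th 1 = th 0.
Proof.
move=> th'; apply/eqP; rewrite -subr_eq0 -normr_le0; apply/ler_addgt0Pr => e e0.
rewrite add0r -[e]mulr1.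
apply: (real_induction01 (Q := fun t => `|th t - th 0| <= e * t)) => t t01.
- move=> below; have [->|t0] := eqVneq t 0; first by rewrite subrr normr0 mulr0.
  have [d d0 hd] := th' t t01 e e0.
  pose r := Num.max 0 (t - d / 2).
  have [r0 rt] : 0 <= r /\ t - d / 2 <= r by split; rewrite le_max lexx ?orbT.
  have r_lt : r < t by rewrite gt_max lt_def t0 (andP t01).1 ltrBlDr ltrDl divr_gt0.
  have r01 : 0 <= r <= 1 by rewrite r0 (le_trans (ltW r_lt)) //; case/andP: t01.
  have rt_norm : `|r - t| = t - r by rewrite distrC ger0_norm // subr_ge0 ltW.
  have rd : `|r - t| < d by rewrite rt_norm; lra.
  have := hd r r01 rd; rewrite rt_norm mulr0 subr0 distrC => hr.
  have := below r; rewrite r0 r_lt => /(_ isT) hb.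
  by apply: le_trans (ler_distD (th r) _ _) _; lra.
- move=> upto; case/andP: (t01) => t0 t1.
  have t01' : 0 <= t <= 1 by rewrite t0 ltW.
  have [d d0 hd] := th' t t01' e e0.
  exists d => // r /andP[tr rtd] r1.
  have r01 : 0 <= r <= 1 by rewrite r1 andbT; lra.
  have rt_norm : `|r - t| = r - t by rewrite ger0_norm // subr_ge0 ltW.
  have rd : `|r - t| < d by rewrite rt_norm; lra.
  have := hd r r01 rd; rewrite rt_norm mulr0 subr0 => hr.
  have := upto t; rewrite lexx t0 => /(_ isT) ht.
  by apply: le_trans (ler_distD (th t) _ _) _; lra.
Qed.

Lemma is_derive01_comp t (G Phi : R -> R) v a :
  is_derive (G t) 1 Phi a -> is_derive01 t G v -> is_derive01 t (Phi \o G) (a * v).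
Proof.
move=> Phi' G' e e0.
pose M := `|a| + `|v| + 1.
have M0 : 0 < M by rewrite /M; have := normr_ge0 a; have := normr_ge0 v; lra.
pose e' := Num.min 1 (e / M).
have e'0 : 0 < e' by rewrite lt_min ltr01 divr_gt0.
have e'1 : e' <= 1 by rewrite ge_min lexx.
have e'M : e' * M <= e by rewrite -ler_pdivlMr // ge_min lexx orbT.
have [d2 d20 Phi_near] := is_derive_approx Phi' e'0.
have [d1 d10 G_near] := G' e' e'0.
have v1 : 0 < `|v| + 1 by have := normr_ge0 v; lra.
exists (Num.min d1 (d2 / (`|v| + 1))); first by rewrite lt_min d10 divr_gt0.
move=> s s01; rewrite lt_min ltr_pdivlMr // => /andP[sd1 sd2].
have Gs := G_near s s01 sd1.
have GsGt : `|G s - G t| <= (`|v| + 1) * `|s - t|.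
  rewrite -(subrK ((s - t) * v) (G s - G t)); apply: le_trans (ler_normD _ _) _.
  by rewrite normrM; have := normr_ge0 (s - t); nra.
have := Phi_near (G s) (le_lt_trans GsGt _); rewrite mulrC => /(_ sd2) PhiGs.
have -> : (Phi \o G) s - (Phi \o G) t - (s - t) * (a * v)
    = Phi (G s) - Phi (G t) - a * (G s - G t) + a * (G s - G t - (s - t) * v).
  by rewrite /=; ring.
apply: le_trans (ler_normD _ _) _; rewrite normrM.
have := ler_wpM2l (normr_ge0 a) Gs; have := ler_wpM2l (ltW e'0) GsGt.
have := ler_wpM2r (normr_ge0 (s - t)) e'M; rewrite /M; lra.
Qed.

Lemma is_derive01_first_integral (G Phi phi v : R -> R) (k : R) :
  (forall y : R, is_derive y 1 Phi (phi y)) ->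
  (forall t, 0 <= t <= 1 -> is_derive01 t G (v t)) ->
  (forall t, 0 <= t <= 1 -> phi (G t) * v t = k) ->
  Phi (G 1) = Phi (G 0) + k.
Proof.
move=> Phi' G' conserved.
suff : Phi (G 1) - 1 * k = Phi (G 0) - 0 * k by rewrite mul1r mul0r subr0 => <-; rewrite subrK.
apply: (is_derive01_eq (th := fun s => Phi (G s) - s * k)) => t t01 e e0.
have [d d0 hd] := is_derive01_comp (Phi' (G t)) (G' t t01) e0.
exists d => // s s01 st.
have -> : Phi (G s) - s * k - (Phi (G t) - t * k) - (s - t) * 0
    = Phi (G s) - Phi (G t) - (s - t) * (phi (G t) * v t) by rewrite conserved //; ring.
exact: hd.
Qed.

Lemma periodic_intz (f : R -> R) (P : R) : (forall y, f (y + P) = f y) ->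
  forall y (q : int), f (y + q%:~R * P) = f y.
Proof.
move=> fP; have fPn y (k : nat) : f (y + k%:R * P) = f y.
  by elim: k y => [|k IH] y; rewrite ?mul0r ?addr0 // -natr1 mulrDl mul1r addrA fP IH.
move=> y [] k; first exact: fPn.
by rewrite NegzE mulrNz mulNr -[in RHS](subrK (k.+1%:R * P) y) fPn.
Qed.

Lemma lipschitz_periodic_translates (f : nat -> R -> R) (k : nat) (P L eps : R) :
  0 < P -> 0 <= L -> 0 < eps ->
  (forall m y, f m (y + P) = f m y) ->
  (forall m a c, (m <= k)%N -> `|f m c - f m a| <= L * `|c - a|) ->
  exists cs : seq R, forall c, exists2 c', c' \in cs &
    forall m y, (m <= k)%N -> `|f m (y + c) - f m (y + c')| <= eps.
Proof.
move=> P0 L0 eps0 fP fL.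
pose N := (Num.truncn (P * L / eps)).+1.
have N0 : 0 < N%:R :> R by rewrite ltr0n.
pose dl := P / N%:R.
have dl0 : 0 < dl by rewrite divr_gt0.
have dlL : dl * L <= eps.
  have := truncnS_gt (P * L / eps); rewrite ltr_pdivrMr // -/N => /ltW PL.
  by rewrite /dl mulrAC ler_pdivrMr // [eps * _]mulrC.
exists [seq j%:R * dl | j <- iota 0 N] => c.
(* reduce c modulo P, then round it down to the grid of step dl *)
pose q := Num.floor (c / P); pose r := c - q%:~R * P.
have r_itv : 0 <= r < P.
  have := floor_itv (c / P); rewrite -/q => /andP[].
  rewrite ler_pdivlMr // ltr_pdivrMr // intrD mulrDl mul1r /r.
  by rewrite subr_ge0 => -> /=; rewrite ltrBlDl.
have rdl0 : 0 <= r / dl by case/andP: r_itv => r0 _; rewrite divr_ge0 // ltW.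
pose j := Num.truncn (r / dl).
have /andP[jr rj] := truncn_itv rdl0; rewrite -/j ler_pdivlMr // ltr_pdivrMr // in jr rj.
have jN : (j < N)%N.
  rewrite -(ltr_nat R); apply: le_lt_trans (_ : r / dl < N%:R).
    by rewrite ler_pdivlMr.
  by rewrite ltr_pdivrMr // /dl mulrCA divff ?mulr1 ?gt_eqF //; case/andP: r_itv.
exists (j%:R * dl); first by apply/mapP; exists j => //; rewrite mem_iota add0n jN.
move=> m y mk.
have -> : y + c = y + r + q%:~R * P by rewrite /r addrA subrK.
rewrite periodic_intz //; apply: le_trans (fL _ _ _ mk) _.
apply: le_trans dlL; rewrite mulrC ler_wpM2r //.
rewrite (_ : y + r - (y + j%:R * dl) = r - j%:R * dl); last by ring.
rewrite ger0_norm ?subr_ge0 //.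
by move: rj; rewrite -natr1 mulrDl mul1r; lra.
Qed.

Lemma is_derive_mull (w y : R) : is_derive y 1 (fun y => w * y) w.
Proof.
apply: is_derive_eq (is_deriveZ w (is_derive_id y 1)) _.
by rewrite [_ *: _]/GRing.scale /= mulr1.
Qed.

Definition deriv_chain (D : nat -> R -> R) :=
  forall m (y : R), is_derive y 1 (D m) (D m.+1 y).

Lemma deriv_chain_continuous (D : nat -> R -> R) m : deriv_chain D -> continuous (D m).
Proof.
move=> D' y; apply/differentiable_continuous/derivable1_diffP.
exact: (@ex_derive _ _ _ _ _ _ _ (D' m y)).
Qed.

Lemma deriv_chainZ (c : R) (D : nat -> R -> R) :
  deriv_chain D -> deriv_chain (fun m y => c * D m y).
Proof. by move=> D' m y; exact (is_deriveZ c (D' m y)). Qed.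

Lemma deriv_chainB (D E : nat -> R -> R) : deriv_chain D -> deriv_chain E ->
  deriv_chain (fun m y => D m y - E m y).
Proof. by move=> D' E' m y; apply: is_deriveB. Qed.

Lemma deriv_chain_shift (D : nat -> R -> R) (a : R) :
  deriv_chain D -> deriv_chain (fun m y => D m (y + a)).
Proof.
move=> D' m y.
have := @is_derive1_comp _ (D m) (shift a) y _ _ (D' m (y + a)) (is_derive_shift y 1 a).
by rewrite mulr1.
Qed.

Lemma deriv_chain_lipschitz (D : nat -> R -> R) m (L : R) :
  deriv_chain D -> (forall y, `|D m.+1 y| <= L) -> forall a c, `|D m c - D m a| <= L * `|c - a|.
Proof.
move=> D' DL a c; wlog ac : a c / a <= c.
  by move=> H; case: (leP a c) => [/H //|/ltW/H]; rewrite distrC [`|a - c|]distrC.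
have [x _ ->] := MVT_segment ac (fun x _ => D' m x)
  (continuous_subspaceT (deriv_chain_continuous (m := m) D')).
by rewrite normrM ler_wpM2r.
Qed.

End RealFunctions.

(* Expressions in z and a parameter b, where [TRecip] stands for 1 / (1 + b cos z) and
   [TCoef] for b; the class is closed under [texpr_deriv], differentiation in z. *)
Inductive texpr := TCos | TSin | TRecip | TCoef | TZero
  | TOpp of texpr | TAdd of texpr & texpr | TMul of texpr & texpr.

Fixpoint texpr_deriv (e : texpr) : texpr :=
  match e with
  | TCos => TOpp TSin
  | TSin => TCos
  | TRecip => TMul TCoef (TMul TSin (TMul TRecip TRecip))
  | TCoef | TZero => TZero
  | TOpp a => TOpp (texpr_deriv a)
  | TAdd a c => TAdd (texpr_deriv a) (texpr_deriv c)
  | TMul a c => TAdd (TMul (texpr_deriv a) c) (TMul a (texpr_deriv c))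
  end.

Section TrigExpressions.
Variable R : realType.

Fixpoint texpr_eval (b z : R) (e : texpr) : R :=
  match e with
  | TCos => cos z
  | TSin => sin z
  | TRecip => (1 + b * cos z)^-1
  | TCoef => b
  | TZero => 0
  | TOpp a => - texpr_eval b z a
  | TAdd a c => texpr_eval b z a + texpr_eval b z c
  | TMul a c => texpr_eval b z a * texpr_eval b z c
  end.

Fixpoint texpr_bound (e : texpr) : R :=
  match e with
  | TCos | TSin | TCoef => 1
  | TRecip => 2
  | TZero => 0
  | TOpp a => texpr_bound a
  | TAdd a c => texpr_bound a + texpr_bound c
  | TMul a c => texpr_bound a * texpr_bound c
  end.

Variable b : R.
Hypothesis b_small : 0 <= b <= 1/2.

Lemma texpr_bound_ge0 e : 0 <= texpr_bound e.
Proof.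
elim: e => /= [||||| a ha | a ha c hc | a ha c hc]; rewrite ?ler01 ?ler0n ?lexx //.
- exact: addr_ge0.
- exact: mulr_ge0.
Qed.

Lemma recip_den_ge z : 1/2 <= 1 + b * cos z.
Proof.
have := cos_geN1 z; have := cos_le1 z; case/andP: b_small => b0 b1.
have : - b <= b * cos z by rewrite -mulrN1 ler_wpM2l // cos_geN1.
lra.
Qed.

Lemma texpr_eval_bound z e : `|texpr_eval b z e| <= texpr_bound e.
Proof.
elim: e => /= [||||| a ha | a ha c hc | a ha c hc].
- exact: cos_max.
- exact: sin_max.
- have den := recip_den_ge z.
  rewrite normfV ger0_norm; last lra.
  by rewrite -[_^-1]mul1r ler_pdivrMr; lra.
- by case/andP: b_small => b0 b1; rewrite ger0_norm //; lra.
- by rewrite normr0.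
- by rewrite normrN.
- by apply: le_trans (ler_normD _ _) _; apply: lerD.
- by rewrite normrM; apply: ler_pM.
Qed.

Lemma texpr_eval_periodic z e : texpr_eval b (z + pi *+ 2) e = texpr_eval b z e.
Proof. by elim: e => //= [|||a ->|a -> c ->|a -> c ->]; rewrite ?cosD2pi ?sinD2pi. Qed.

Lemma texpr_eval_derive (z : R) e :
  is_derive z 1 (fun z => texpr_eval b z e) (texpr_eval b z (texpr_deriv e)).
Proof.
elim: e => /= [||||| a ha | a ha c hc | a ha c hc].
- exact: is_derive_cos.
- exact: is_derive_sin.
- have den0 : 1 + b * cos z != 0 by have := recip_den_ge z; apply: contraTneq => ->; lra.
  have den' : is_derive z 1 (fun z => 1 + b * cos z) (b * - sin z).
    have := is_deriveD (is_derive_cst (1 : R) z 1) (is_deriveZ b (is_derive_cos z)).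
    by rewrite add0r.
  apply: is_derive_eq (@is_deriveV R (fun z => 1 + b * cos z) z _ 1 den0 den') _.
  by rewrite [_ *: _]/GRing.scale /=; field.
- exact: is_derive_cst.
- exact: is_derive_cst.
- exact: is_deriveN.
- exact: is_deriveD.
- by apply: is_derive_eq (is_deriveM ha hc) _; rewrite /GRing.scale /=; ring.
Qed.

Lemma texpr_eval_deriv_recip m (z : R) :
  texpr_eval b z (iter m.+1 texpr_deriv TRecip)
  = b * texpr_eval b z (iter m texpr_deriv (TMul TSin (TMul TRecip TRecip))).
Proof.
elim: m z => [|m IH] z; first by [].
have := texpr_eval_derive z (iter m.+1 texpr_deriv TRecip); rewrite (funext IH).
move=> /(@derive_val _ _ _ _ _ _ _).
have h := is_deriveZ b (texpr_eval_derive z (iter m texpr_deriv (TMul TSin (TMul TRecip TRecip)))).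
by rewrite (@derive_val _ _ _ _ _ _ _ h) [_ *: _]/GRing.scale /= => <-.
Qed.

End TrigExpressions.

Section Ripple.
Variables (R : realType) (b w P : R).
Hypothesis b_small : 0 <= b <= 1/2.

(* [ripple m] is the m-th derivative of y |-> P / (1 + b cos (w y)). *)
Definition ripple (m : nat) (y : R) : R :=
  P * w ^+ m * texpr_eval b (w * y) (iter m texpr_deriv TRecip).

Lemma ripple_deriv_chain : deriv_chain ripple.
Proof.
move=> m y.
have := @is_derive1_comp R (fun z => texpr_eval b z (iter m texpr_deriv TRecip)) _ y _ _
  (texpr_eval_derive b_small (w * y) _) (is_derive_mull w y).
move=> /(is_deriveZ (P * w ^+ m)) h; apply: is_derive_eq h _.
by rewrite /ripple [_ *: _]/GRing.scale /= exprS; ring.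
Qed.

Lemma ripple_bound m y :
  `|ripple m y| <= `|P| * `|w| ^+ m * texpr_bound R (iter m texpr_deriv TRecip).
Proof.
rewrite /ripple !normrM normrX ler_wpM2l ?mulr_ge0 ?exprn_ge0 //.
exact: texpr_eval_bound.
Qed.

Hypothesis wP : w * P = pi *+ 2.
Hypothesis P_gt0 : 0 < P.

Lemma ripple_periodic m y : ripple m (y + P) = ripple m y.
Proof. by rewrite /ripple mulrDr wP texpr_eval_periodic. Qed.

Lemma ripple_translates (k : nat) (eps : R) : 0 < eps ->
  exists cs : seq R, forall c, exists2 c', c' \in cs &
    forall m y, (m <= k)%N -> `|ripple m (y + c) - ripple m (y + c')| <= eps.
Proof.
move=> eps0.
pose Lip m := `|P| * `|w| ^+ m.+1 * texpr_bound R (iter m.+1 texpr_deriv TRecip).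
have Lip_ge0 m : 0 <= Lip m by rewrite !mulr_ge0 ?exprn_ge0 ?texpr_bound_ge0.
apply: (lipschitz_periodic_translates (L := \sum_(m < k.+1) Lip m) P_gt0 _ eps0 ripple_periodic).
  by rewrite sumr_ge0.
move=> m a c mk; apply: deriv_chain_lipschitz ripple_deriv_chain _ a c => y.
apply: le_trans (ripple_bound _ _) _.
by rewrite (bigD1 (Ordinal (mk : (m < k.+1)%N))) //= lerDl sumr_ge0.
Qed.

Lemma ripple0_gt0 y : 0 < ripple 0 y.
Proof.
rewrite /ripple /= expr0 mulr1 mulr_gt0 // invr_gt0.
by have := recip_den_ge b_small (w * y); lra.
Qed.

Lemma w_gt0 : 0 < w.
Proof. by rewrite -(pmulr_lgt0 _ P_gt0) wP pmulrn_lgt0 // pi_gt0. Qed.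

Definition ripple_clock (y : R) : R := (y + b / w * sin (w * y)) / P.

Lemma ripple_clock_derive (y : R) : is_derive y 1 ripple_clock (ripple 0 y)^-1.
Proof.
have sin' := is_derive1_comp (is_derive_sin (w * y)) (is_derive_mull w y).
have -> : ripple_clock = P^-1 \*: (id + (b / w) \*: (sin \o (fun y => w * y))).
  by apply/funext => z; rewrite /ripple_clock /= mulrC.
apply: is_derive_eq
  (is_deriveZ P^-1 (is_deriveD (is_derive_id y 1) (is_deriveZ (b / w) sin'))) _.
have den := recip_den_ge b_small (w * y).
rewrite /ripple /= expr0 mulr1 /GRing.scale /=.
by field; rewrite !gt_eqF ?w_gt0 //; lra.
Qed.

Lemma ripple_clock_shift y : ripple_clock (y + P) = ripple_clock y + 1.
Proof.
rewrite /ripple_clock mulrDr wP sinD2pi.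
by field; rewrite !gt_eqF // w_gt0.
Qed.

Lemma ripple_clock_inj : injective ripple_clock.
Proof.
have clock_cont : continuous ripple_clock.
  move=> x; apply/differentiable_continuous/derivable1_diffP.
  exact: (@ex_derive _ _ _ _ _ _ _ (ripple_clock_derive x)).
have clock_lt y1 y2 : y1 < y2 -> ripple_clock y1 < ripple_clock y2.
  move=> y12; rewrite -subr_gt0.
  have [c _ ->] := MVT y12 (fun x _ => ripple_clock_derive x) (continuous_subspaceT clock_cont).
  by rewrite mulr_gt0 ?invr_gt0 ?ripple0_gt0 ?subr_gt0.
by move=> y1 y2 E; case: (ltgtP y1 y2) => // /clock_lt; rewrite E ltxx.
Qed.

End Ripple.

Lemma ripple_small_coef (R : realType) (w P : R) (k : nat) : 0 <= w -> 0 <= P ->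
  exists2 b : R, 0 < b <= 1/2 &
    forall m y, (m <= k)%N -> `|ripple b w P m y| <= 2 * P.
Proof.
move=> w0 P0.
pose G := TMul TSin (TMul TRecip TRecip).
pose K := \sum_(m < k) w ^+ m.+1 * texpr_bound R (iter m texpr_deriv G).
have K0 : 0 <= K by rewrite sumr_ge0 // => m _; rewrite mulr_ge0 ?exprn_ge0 ?texpr_bound_ge0.
have [b [b0 bK b_small]] : exists b : R, [/\ 0 < b, b * K <= 1/2 & 0 <= b <= 1/2].
  have K1 : 0 < K + 1 by lra.
  exists (1/2 / (K + 1)); split; first by rewrite divr_gt0.
    have -> : 1/2 / (K + 1) * K = 1/2 * (K / (K + 1)) by field; rewrite gt_eqF.
    by rewrite ler_piMr // ler_pdivrMr // mul1r; lra.
  apply/andP; split; first by rewrite divr_ge0 // ltW.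
  by rewrite ler_pdivrMr // ler_peMr; lra.
exists b; first by rewrite b0 (andP b_small).2.
move=> [|m] y mk.
  rewrite /ripple /= expr0 mulr1 normrM ger0_norm // mulrC ler_wpM2r //.
  exact: (texpr_eval_bound b_small _ TRecip).
rewrite /ripple texpr_eval_deriv_recip // -/G.
have Km : w ^+ m.+1 * texpr_bound R (iter m texpr_deriv G) <= K.
  rewrite /K (bigD1 (Ordinal (mk : (m < k)%N))) //= lerDl.
  by rewrite sumr_ge0 // => j _; rewrite mulr_ge0 ?exprn_ge0 ?texpr_bound_ge0.
have evG := texpr_eval_bound b_small (w * y) (iter m texpr_deriv G).
have : w ^+ m.+1 * (b * `|texpr_eval b (w * y) (iter m texpr_deriv G)|) <= 2.
  apply: (@le_trans _ _ (b * K)); last lra.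
  rewrite mulrCA ler_wpM2l ?(ltW b0) //; apply: le_trans Km.
  by rewrite ler_wpM2l ?exprn_ge0.
rewrite !normrM normrX (ger0_norm P0) (ger0_norm w0) (ger0_norm (ltW b0)).
nra.
Qed.

Section FieldNorms.
Variables (R : realType) (n : nat).

Lemma knorm_le (f : vfun R n) k M : 0 <= M ->
  (forall s i x, (size s <= k)%N -> `|iterd s (Defs.comp f i) x| <= M) -> knorm k f <= M.
Proof.
move=> M0 fM; rewrite /knorm; set E := [set r | _].
have [[r Er]|E0] := pselect (E !=set0).
  by apply: ge_sup => [|_ [s [i [x [sk ->]]]]]; [exists r | exact: fM].
suff -> : E = set0 by rewrite sup0.
by apply/seteqP; split => // r Er; apply: E0; exists r.
Qed.

Lemma all_bounded_entries (f : vfun R n) : all_bounded f ->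
  exists M, forall x i, `|f x ord0 i| <= M.
Proof.
move=> f_bd; have [M fM] := choice (fun i => f_bd i [::]).
exists (\sum_i `|M i|) => x i; apply: le_trans (fM i x) _; apply: le_trans (ler_norm _) _.
by rewrite (bigD1 i) //= lerDl sumr_ge0.
Qed.

(* [knorm] is a [sup], which is a junk value on unbounded sets. *)
Lemma entry_le_knorm0 (f : vfun R n) : (exists M, forall x i, `|f x ord0 i| <= M) ->
  forall x i, `|f x ord0 i| <= knorm 0 f.
Proof.
move=> [M fM] x i; apply: ub_le_sup; last by exists [::], i, x.
by exists M => _ [s [j [y [s0 ->]]]]; case: s s0 => // _; exact: fM.
Qed.

End FieldNorms.

Section AxialFields.
Variables (R : realType) (n : nat) (i0 : 'I_n).

Definition axial_field (h : R -> R) : vfun R n := fun x => h (x ord0 i0) *: delta_mx 0 i0.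

Lemma comp_axial_field (h : R -> R) (i : 'I_n) :
  Defs.comp (axial_field h) i = fun x => (i == i0)%:R * h (x ord0 i0).
Proof. by apply/funext => x; rewrite /Defs.comp /axial_field !mxE eqxx /= mulrC. Qed.

Lemma is_derive_coord (H : R -> R) (x : pt R n) (j : 'I_n) (a : R) :
  is_derive (x ord0 i0) 1 H a ->
  is_derive x (delta_mx 0 j : pt R n) (fun y : pt R n => H (y ord0 i0)) ((j == i0)%:R * a).
Proof.
move=> [H' Ha].
have quot : (fun h : R => h^-1 *: (((fun y : pt R n => H (y ord0 i0)) \o shift x)
                                     (h *: (delta_mx 0 j : pt R n)) - H (x ord0 i0)))
    = if j == i0 then fun h : R => h^-1 *: ((H \o shift (x ord0 i0)) (h *: 1) - H (x ord0 i0))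
      else cst 0.
  apply/funext => h /=; rewrite !mxE /= eq_sym.
  case: (j == i0) => /=; first by rewrite [h%:A]/GRing.scale.
  by rewrite mulr0 add0r subrr scaler0.
split; first by rewrite /derivable quot; case: (j == i0) => //; exact: is_cvg_cst.
by rewrite /derive quot; case: (j == i0); rewrite ?mul1r -?Ha // mul0r lim_cst.
Qed.

Lemma iterd_coord (D : nat -> R -> R) s : deriv_chain D ->
  iterd s (fun y : pt R n => D 0%N (y ord0 i0))
  = fun y => (all (pred1 i0) s)%:R * D (size s) (y ord0 i0).
Proof.
move=> D'; elim: s => [|j s IH] /=; first by apply/funext => y; rewrite mul1r.
rewrite IH /pd; apply/funext => x.
pose c : R := (all (pred1 i0) s)%:R.
have cD : is_derive (x ord0 i0) 1 (fun r => c * D (size s) r) (c * D (size s).+1 (x ord0 i0)).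
  exact (is_deriveZ c (D' (size s) (x ord0 i0))).
by rewrite (@derive_val _ _ _ _ _ _ _ (is_derive_coord j cD)) mulrA -natrM mulnb eq_sym.
Qed.

Lemma iterd_axial_field (D : nat -> R -> R) s i : deriv_chain D ->
  iterd s (Defs.comp (axial_field (D 0%N)) i)
  = fun y => ((i == i0) && all (pred1 i0) s)%:R * D (size s) (y ord0 i0).
Proof.
move=> D'; rewrite comp_axial_field.
rewrite (iterd_coord (D := fun m y => (i == i0)%:R * D m y) s (deriv_chainZ _ D')) /=.
by apply/funext => y; rewrite mulrA -natrM mulnb andbC.
Qed.

Lemma knorm_axial_field_le (D : nat -> R -> R) k M : deriv_chain D -> 0 <= M ->
  (forall m y, (m <= k)%N -> `|D m y| <= M) -> knorm k (axial_field (D 0%N)) <= M.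
Proof.
move=> D' M0 DM; apply: knorm_le => // s i x sk; rewrite iterd_axial_field //.
by case: (_ && _); rewrite ?mul1r ?DM // mul0r normr0.
Qed.

Lemma Cinf_axial_field (D : nat -> R -> R) : deriv_chain D ->
  (forall m, exists M, forall y, `|D m y| <= M) ->
  (forall k eps, 0 < eps -> exists cs : seq R, forall c, exists2 c', c' \in cs &
     forall m y, (m <= k)%N -> `|D m (y + c) - D m (y + c')| <= eps) ->
  Cinf_ap (axial_field (D 0%N)).
Proof.
move=> D' D_bd D_tr; split; [|split].
- move=> i s; rewrite iterd_axial_field //; split.
    move=> y; apply: (@continuous_comp _ _ _ (fun x : pt R n => x ord0 i0)
      (fun r => ((i == i0) && all (pred1 i0) s)%:R * D (size s) r)).
      exact: coord_continuous.
    exact: (deriv_chain_continuous (m := size s) (deriv_chainZ _ D')).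
  move=> x j.
  exact: (@ex_derive _ _ _ _ _ _ _ (is_derive_coord j (is_deriveZ _ (D' _ _)))).
- move=> i s; have [M DM] := D_bd (size s); exists `|M| => x.
  rewrite iterd_axial_field //; case: (_ && _); rewrite ?mul1r ?mul0r ?normr0 //.
  exact: le_trans (DM _) (ler_norm _).
- move=> k eps eps0; have [cs D_cs] := D_tr k (eps / 2) (divr_gt0 eps0 (ltr0n _ 2)).
  exists [seq const_mx c : pt R n | c <- cs] => c.
  have [c' c'_cs Dc'] := D_cs (c ord0 i0).
  exists (const_mx c'); first exact: map_f.
  have -> : vsub (transl c (axial_field (D 0%N))) (transl (const_mx c') (axial_field (D 0%N)))
      = axial_field ((fun m y => D m (y + c ord0 i0) - D m (y + c')) 0%N).
    by apply/funext => y; rewrite /vsub /transl /axial_field !mxE -scalerBl.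
  apply: le_lt_trans (_ : eps / 2 < eps); last by rewrite ltr_pdivrMr // ltr_pMr // ltr1n.
  apply: (knorm_axial_field_le (D := fun m y => D m (y + c ord0 i0) - D m (y + c'))) => //.
    by apply: deriv_chainB; apply: deriv_chain_shift.
  by rewrite divr_ge0 // ltW.
Qed.

End AxialFields.

Section ConstantFields.
Variables (R : realType) (n : nat).

Lemma iterd_cst (a : R) s :
  iterd s (fun _ : pt R n => a) = fun _ => if s is [::] then a else 0.
Proof. by elim: s => [|j s IH] //=; rewrite IH /pd; apply/funext => x; exact: derive_cst. Qed.

Lemma knorm_cst_le (c : pt R n) k M : 0 <= M -> (forall i, `|c ord0 i| <= M) ->
  knorm k (fun _ => c) <= M.
Proof.
move=> M0 cM; apply: knorm_le => // s i x _.
by rewrite /Defs.comp iterd_cst; case: s; rewrite ?normr0.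
Qed.

Lemma knorm_cst0_lt k (eps : R) : 0 < eps -> knorm k (fun _ : pt R n => 0) < eps.
Proof. by apply: le_lt_trans; apply: knorm_cst_le => // i; rewrite mxE normr0. Qed.

Lemma Cinf_cst (c : pt R n) : Cinf_ap (fun _ => c).
Proof.
split; [|split].
- move=> i s; rewrite /Defs.comp iterd_cst; split; first exact: cst_continuous.
  by move=> x j; exact: derivable_cst.
- move=> i s; exists `|c ord0 i| => x.
  by rewrite /Defs.comp iterd_cst; case: s; rewrite ?normr0.
- move=> k eps eps0; exists [:: 0] => c'; exists 0; rewrite ?mem_head //.
  have -> : vsub (transl c' (fun _ => c)) (transl 0 (fun _ => c)) = fun _ => 0.
    by apply/funext => x; rewrite /vsub subrr.
  exact: knorm_cst0_lt.
Qed.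

Lemma jac_cst (c : pt R n) x : jac (fun _ => c) x = 0.
Proof. by apply/matrixP => i j; rewrite !mxE /pd /Defs.comp; exact: derive_cst. Qed.

End ConstantFields.

Section ExpSolutions.
Variables (R : realType) (n : nat).
Implicit Types (u : vfun R n) (g : R -> vfun R n).

Lemma exp_sol_is_derive01 u g x i t : IsExpSol u g -> 0 <= t <= 1 ->
  is_derive01 t (fun s => g s x ord0 i) (u (x + g t x) ord0 i).
Proof.
move=> [_ [g_diff [ug_Cinf [g' _]]]] t01 e e0.
have [d d0 dq] := g' t t01 0%N e e0.
exists d => // s s01 st.
have [->|s_ne_t] := eqVneq s t; first by rewrite !subrr mul0r subr0 normr0 mulr0.
have st0 : 0 < `|s - t| by rewrite normr_gt0 subr_eq0.
move: (dq s s01); rewrite st0 st => /(_ isT); set q := vsub _ _ => qe.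
have [Ms gs_bd] := all_bounded_entries (g_diff s s01).1.2.1.
have [Mt gt_bd] := all_bounded_entries (g_diff t t01).1.2.1.
have [Mu ug_bd] := all_bounded_entries (ug_Cinf t t01).2.1.
have q_bd : exists M, forall y j, `|q y ord0 j| <= M.
  exists (`|(s - t)^-1| * (Ms + Mt) + Mu) => y j; rewrite /q /vsub /vscale /compose_id !mxE.
  apply: le_trans (ler_normB _ _) _; apply: lerD; last exact: ug_bd.
  by rewrite normrM ler_wpM2l //; apply: le_trans (ler_normB _ _) _; apply: lerD.
have := le_trans (entry_le_knorm0 q_bd x i) (ltW qe).
rewrite /q /vsub /vscale /compose_id !mxE => qxe.
have -> : g s x ord0 i - g t x ord0 i - (s - t) * u (x + g t x) ord0 i
    = (s - t) * ((s - t)^-1 * (g s x ord0 i - g t x ord0 i) - u (x + g t x) ord0 i).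
  by rewrite mulrBr mulrA divff ?mul1r // subr_eq0.
by rewrite normrM mulrC ler_wpM2r.
Qed.

Lemma exp_sol_first_integral u g x i (Phi phi : R -> R) (k : R) : IsExpSol u g ->
  (forall y : R, is_derive y 1 Phi (phi y)) ->
  (forall t, 0 <= t <= 1 -> phi (g t x ord0 i) * u (x + g t x) ord0 i = k) ->
  Phi (g 1 x ord0 i) = Phi 0 + k.
Proof.
move=> sol Phi' conserved.
have g0 : g 0 x ord0 i = 0 by rewrite sol.1 /vzero mxE.
rewrite -g0; apply: (is_derive01_first_integral (G := fun s => g s x ord0 i)) Phi' _ conserved.
by move=> t t01; exact: exp_sol_is_derive01.
Qed.

Lemma expLG_sol u (v : vfun R n) : (exists g, IsExpSol u g) ->
  (forall g, IsExpSol u g -> g 1 = v) -> expLG u = v.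
Proof.
move=> ex sol_v; rewrite /expLG; case: pselect => // h.
by case: (cid h) => g /= /sol_v.
Qed.

Lemma expLG_nosol u : ~ (exists g, IsExpSol u g) -> expLG u = @vzero R n.
Proof. by rewrite /expLG; case: pselect. Qed.

Lemma exp_sol_cst (c : pt R n) : IsExpSol (fun _ => c) (fun t _ => t *: c).
Proof.
have diff_quot s t : s != t ->
    vsub (vscale (s - t)^-1 (vsub (fun _ => s *: c) (fun _ => t *: c))) (fun _ => c)
    = fun _ => 0.
  move=> st; apply/funext => x; rewrite /vsub /vscale -scalerBl scalerA.
  by rewrite mulVf ?scale1r ?subrr // subr_eq0.
split; [|split; [|split; [|split]]].
- by apply/funext => x; rewrite scale0r.
- move=> t _; split; first exact: Cinf_cst.
  by exists 1 => // x; rewrite jac_cst addr0 det1.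
- by move=> t _; exact: Cinf_cst.
- move=> t _ k eps eps0; exists 1 => // s _ /andP[st _].
  by rewrite diff_quot ?knorm_cst0_lt // -subr_eq0 -normr_gt0.
- move=> t _ k eps eps0; exists 1 => // s _ _.
  have -> : vsub (compose_id (fun _ => c) (fun _ => s *: c))
                 (compose_id (fun _ => c) (fun _ => t *: c)) = fun _ => 0.
    by apply/funext => x; rewrite /vsub subrr.
  exact: knorm_cst0_lt.
Qed.

Lemma expLG_cst (c : pt R n) : expLG (fun _ => c) = fun _ => c.
Proof.
apply: expLG_sol; first by exists (fun t _ => t *: c); exact: exp_sol_cst.
move=> g sol; apply/funext => x; apply/matrixP => a i; rewrite (ord1 a).
have := exp_sol_first_integral (x := x) (i := i) (Phi := id) (phi := fun _ => 1)
  (k := c ord0 i) sol (fun y => is_derive_id y 1) (fun t _ => mul1r _).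
by rewrite add0r.
Qed.

End ExpSolutions.

Section RippleField.
Variables (R : realType) (n : nat) (i0 : 'I_n) (b w P : R).
Hypotheses (b_small : 0 <= b <= 1/2) (wP : w * P = pi *+ 2) (P_gt0 : 0 < P).

Local Notation u := (axial_field i0 (ripple b w P 0)).

Lemma Cinf_ripple_field : Cinf_ap u.
Proof.
apply: Cinf_axial_field; first exact: ripple_deriv_chain.
  by move=> m; eexists => y; exact: ripple_bound.
by move=> k eps; exact: ripple_translates.
Qed.

Lemma ripple_field_entry y i :
  u y ord0 i = (i == i0)%:R * ripple b w P 0 (y ord0 i0).
Proof. by rewrite -[LHS]/(Defs.comp u i y) comp_axial_field. Qed.

Lemma expLG_ripple_field : (exists g, IsExpSol u g) ->
  expLG u = fun _ => P *: delta_mx 0 i0.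
Proof.
move=> ex; apply: expLG_sol ex _ => g sol; apply/funext => x; apply/matrixP => a i.
rewrite (ord1 a) !mxE eqxx /=.
have [-> | i_ne] := eqVneq i i0; last first.
  have conserved t : 0 <= t <= 1 -> 1 * u (x + g t x) ord0 i = 0.
    by rewrite ripple_field_entry (negbTE i_ne) mul0r mulr0.
  have := exp_sol_first_integral sol (fun y => is_derive_id y 1) conserved.
  by rewrite mulr0n mulr0 addr0.
pose clock y := ripple_clock b w P (y + x ord0 i0).
have clock' (y : R) : is_derive y 1 clock (ripple b w P 0 (y + x ord0 i0))^-1.
  have := @is_derive1_comp _ _ (shift (x ord0 i0)) y _ _
    (ripple_clock_derive b_small wP P_gt0 (y + x ord0 i0)) (is_derive_shift y 1 (x ord0 i0)).
  by rewrite mulr1.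
have conserved t : 0 <= t <= 1 ->
    (ripple b w P 0 (g t x ord0 i0 + x ord0 i0))^-1 * u (x + g t x) ord0 i0 = 1.
  by rewrite ripple_field_entry eqxx mul1r mxE addrC mulVf // gt_eqF // ripple0_gt0.
have := exp_sol_first_integral sol clock' conserved.
rewrite /clock add0r -ripple_clock_shift // => /ripple_clock_inj.
by rewrite mulr1n mulr1 addrC => /(_ b_small wP P_gt0) /addrI.
Qed.

Lemma ripple_field_nonconstant (c : pt R n) : 0 < b -> u <> fun _ => c.
Proof.
move=> b0 uc.
have w0 : w != 0 by rewrite gt_eqF // (w_gt0 wP P_gt0).
have val y : u y ord0 i0 = P / (1 + b * cos (w * y ord0 i0)).
  by rewrite ripple_field_entry eqxx mul1r /ripple /= expr0 mulr1.
have := val 0; have := val ((pi / w) *: delta_mx 0 i0).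
rewrite uc !mxE eqxx mulr1 mulr0 cos0.
rewrite [w * _]mulrC divfK // cospi mulrN1 mulr1 => -> /eqP; apply/negP.
case/andP: b_small => _ b1; rewrite gt_eqF // ltr_pM2l // ltf_pV2 ?posrE; lra.
Qed.

End RippleField.

Lemma expLG_not_injective_near0 (R : realType) (n : nat) (i0 : 'I_n) (k : nat) (d : R) :
  0 < d -> exists u v : vfun R n,
    [/\ Cinf_ap u, Cinf_ap v, knorm k u < d, knorm k v < d & u <> v /\ expLG u = expLG v].
Proof.
move=> d0; pose P := d / 4; pose w := pi *+ 2 / P.
have P0 : 0 < P by rewrite divr_gt0.
have wP : w * P = pi *+ 2 by rewrite divfK ?gt_eqF.
have [b /andP[b0 b1] ripple_le] := ripple_small_coef k (ltW (w_gt0 wP P0)) (ltW P0).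
have b_small : 0 <= b <= 1/2 by rewrite ltW.
pose u := axial_field i0 (ripple b w P 0).
have Pd : 2 * P < d by rewrite /P; lra.
have u_small : knorm k u < d.
  apply: le_lt_trans Pd; apply: knorm_axial_field_le (ripple_deriv_chain _ _ b_small) _ ripple_le.
  lra.
have cst_small (a : R) : 0 <= a <= P -> knorm k (fun _ => a *: delta_mx 0 i0) < d.
  move=> /andP[a0 aP]; apply: le_lt_trans (knorm_cst_le _ a0 _) _; last lra.
  move=> i; rewrite !mxE eqxx /=.
  by case: (i == i0); rewrite ?mulr1 ?mulr0 ?normr0 ?ger0_norm.
have [sol | no_sol] := pselect (exists g, IsExpSol u g).
  exists u, (fun _ => P *: delta_mx 0 i0); split; rewrite ?cst_small ?lexx ?(ltW P0) //.
  - exact: Cinf_ripple_field.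
  - exact: Cinf_cst.
  by split; [exact: ripple_field_nonconstant | rewrite expLG_cst expLG_ripple_field].
(* without a solution, [expLG u] is the junk value [0 = expLG 0] *)
exists u, (fun _ => 0); split=> //.
- exact: Cinf_ripple_field.
- exact: Cinf_cst.
- exact: knorm_cst0_lt.
by split; [exact: ripple_field_nonconstant | rewrite expLG_cst expLG_nosol].
Qed.

Theorem corollary3p5 (R : realType) (n : nat) (hn : (0 < n)%N) :
  ~ exists V : set (vfun R n),
      open_nbhd0 V /\ C1F_diffeo_onto_image V (@expLG R n).
Proof.
move=> [V [[_ [V0 V_open]] [_ [expLG_inj _]]]].
have [k [d [d0 ball_V]]] := V_open _ V0.
have sub0 (f : vfun R n) : vsub f (@vzero R n) = f.
  by apply/funext => x; rewrite /vsub /vzero subr0.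
have [u [v [u_Cinf v_Cinf u_small v_small [u_ne_v expLG_uv]]]] :=
  expLG_not_injective_near0 (Ordinal hn) k d0.
by apply/u_ne_v/expLG_inj => //; apply: ball_V; rewrite ?sub0.
Qed.
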